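(* Let $c$ be a joint choice on $\mathfrak{M}_Q\subseteq\prod_{q\in Q}2^{X_q}$ and let $S_1,\dots,S_m$ be nonempty subsets of $Q$ with $S_1\cap\cdots\cap S_m\neq\emptyset$, such that $c$ is $S_j$-separable for every $j\in\{1,\dots,m\}$. Suppose there is a permutation $\sigma$ of $\{1,\dots,m\}$ such that, for every $k\in\{1,\dots,m-1\}$, $\mathfrak{M}_Q$ satisfies menus betweenness with respect to the pair $S_{\sigma(1)}\cap\cdots\cap S_{\sigma(k)}$ and $S_{\sigma(k+1)}$. Then $c$ is $(S_1\cap\cdots\cap S_m)$-separable.
   Context: Let $Q=\{1,\dots,n\}$ with $n\ge 2$ be a finite set of dimensions. For each $q\in Q$, $X_q$ is a nonempty finite set, and $2^{X_q}$ denotes the family of nonempty subsets of $X_q$. A (multidimensional) menu is a tuple $A_Q=(A_q)_{q\in Q}\in\prod_{q\in Q}2^{X_q}$; its alternatives are the elements $x_Q=(x_q)_{q\in Q}$ of $\prod_{q\in Q}A_q$. Let $\mathfrak{M}_Q\subseteq\prod_{q\in Q}2^{X_q}$ be a nonempty family of menus. A joint choice on $\mathfrak{M}_Q$ is a map $c$ assigning to each $A_Q\in\mathfrak{M}_Q$ a set $c(A_Q)$ with $\emptyset\neq c(A_Q)\subseteq\prod_{q\in Q}A_q$. For nonempty $S\subseteq Q$, write $-S=Q\setminus S$, $x_S=(x_q)_{q\in S}$, and $\pi_S$ for the projection $x_Q\mapsto x_S$ from $\prod_{q\in Q}X_q$ to $\prod_{q\in S}X_q$, extended to sets of alternatives by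 taking images, and to menus by $\pi_S(A_Q)=A_S:=(A_q)_{q\in S}$; set $\pi_S(\mathfrak{M}_Q)=\{\pi_S(A_Q):A_Q\in\mathfrak{M}_Q\}$. For $A_S=(A_q)_{q\in S}$ and $B_{-S}=(B_q)_{q\in -S}$, $(A_S,B_{-S})$ denotes the menu whose $q$-component is $A_q$ for $q\in S$ and $B_q$ for $q\in -S$. A joint choice $c$ on $\mathfrak{M}_Q$ is $S$-separable (for nonempty $S\subseteq Q$) if $\pi_S(c(A_S,B_{-S}))=\pi_S(c(A_S,C_{-S}))$ for all $A_S\in\pi_S(\mathfrak{M}_Q)$ and $B_{-S},C_{-S}\in\pi_{-S}(\mathfrak{M}_Q)$ such that $(A_S,B_{-S}),(A_S,C_{-S})\in\mathfrak{M}_Q$ (for $S=Q$ this condition is vacuous). For nonempty $S,T\subseteq Q$, the family $\mathfrak{M}_Q$ satisfies menus betweenness with respect to $S$ and $T$ if for all $A_Q,B_Q\in\mathfrak{M}_Q$ with $\pi_{S\cap T}(A_Q)=\pi_{S\cap T}(B_Q)$ there is $E_Q\in\mathfrak{M}_Q$ with $\pi_S(E_Q)=\pi_S(A_Q)$ and $\pi_T(E_Q)=\pi_T(B_Q)$. *)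

From mathcomp Require Import all_boot all_fingroup.
Set Implicit Arguments. Unset Strict Implicit. Unset Printing Implicit Defensive.

Section Defs.
Variables (n : nat) (X : 'I_n -> finType).

Definition alt := {dffun forall q : 'I_n, X q}.
(* menus A_Q = (A_q)_q, with A_q a subset of X_q (nonemptiness imposed separately) *)
Definition menu := {dffun forall q : 'I_n, {set X q}}.

Definition menu_ok (A : menu) : Prop := forall q, A q != set0.

Definition in_menu (A : menu) (x : alt) : bool := [forall q, x q \in A q].

(* partial alternative x_S, encoded as Some (x q) for q in S and None elsewhere *)
Definition palt := {dffun forall q : 'I_n, option (X q)}.
Definition proj (S : {set 'I_n}) (x : alt) : palt :=
  [ffun q => if q \in S then Some (x q) else None].
Definition proj_set (S : {set 'I_n}) (P : {set alt}) : {set palt} :=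
  [set proj S x | x in P].

Definition agree_on (S : {set 'I_n}) (A B : menu) : Prop :=
  forall q, q \in S -> A q = B q.

Definition glue (S : {set 'I_n}) (A B : menu) : menu :=
  [ffun q => if q \in S then A q else B q].

Definition joint_choice (M : {set menu}) (c : menu -> {set alt}) : Prop :=
  forall A, A \in M -> c A != set0 /\ (forall x, x \in c A -> in_menu A x).

(* S-separability.  A_S ranges over pi_S(M) (represented by a menu A whose
   S-part is in pi_S(M)), B_{-S}, C_{-S} over pi_{-S}(M). *)
Definition separable (M : {set menu}) (c : menu -> {set alt})
    (S : {set 'I_n}) : Prop :=
  forall A B C : menu,
    (exists2 D, D \in M & agree_on S A D) ->
    (exists2 D, D \in M & agree_on (~: S) B D) ->
    (exists2 D, D \in M & agree_on (~: S) C D) ->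
    glue S A B \in M -> glue S A C \in M ->
    proj_set S (c (glue S A B)) = proj_set S (c (glue S A C)).

Definition menus_betweenness (M : {set menu}) (S T : {set 'I_n}) : Prop :=
  forall A B, A \in M -> B \in M -> agree_on (S :&: T) A B ->
    exists2 E, E \in M & agree_on S E A /\ agree_on T E B.

End Defs.

(* Separability says the S-projection of the choice depends only on the
   S-part of the menu.  If c is S- and T-separable and betweenness holds for
   S and T, two menus agreeing on S ∩ T are linked by a menu E agreeing with
   the first on S and with the second on T; projecting both equalities to
   S ∩ T shows that c is (S ∩ T)-separable.  Intersecting the S_j one at a
   time in the order given by sigma yields the theorem. *)
From mathcomp Require Import all_boot all_fingroup.
Set Implicit Arguments. Unset Strict Implicit. Unset Printing Implicit Defensive.

Section Separability.
Variables (n : nat) (X : 'I_n -> finType).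
Implicit Types (M : {set menu X}) (c : menu X -> {set alt X}) (S T : {set 'I_n}).

Definition agree_separable M c S :=
  forall A B, A \in M -> B \in M -> agree_on S A B ->
    proj_set S (c A) = proj_set S (c B).

Lemma proj_set_subset S T (P Q : {set alt X}) : T \subset S ->
  proj_set S P \subset proj_set S Q -> proj_set T P \subset proj_set T Q.
Proof.
move=> sTS /subsetP sPQ; apply/subsetP => _ /imsetP [x xP ->].
have /imsetP [y yQ /ffunP exy] := sPQ _ (imset_f (proj S) xP).
apply/imsetP; exists y => //; apply/ffunP => q; rewrite !ffunE.
case: ifP => // qT; move: (exy q).
by rewrite !ffunE (subsetP sTS q qT).
Qed.

Lemma proj_set_eq_subset S T (P Q : {set alt X}) : T \subset S ->
  proj_set S P = proj_set S Q -> proj_set T P = proj_set T Q.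
Proof.
by move=> sTS ePQ; apply/eqP; rewrite eqEsubset !(proj_set_subset sTS) ?ePQ.
Qed.

Lemma glue_agree S (A B : menu X) : agree_on S A B -> glue S A B = B.
Proof. by move=> eAB; apply/ffunP => q; rewrite ffunE; case: ifP => // /eAB. Qed.

Lemma separableP M c S : separable M c S <-> agree_separable M c S.
Proof.
split=> [sepS A B AM BM eAB | sepS A B C _ _ _ ABM ACM].
  have eAA : agree_on S A A by [].
  rewrite -{1}(glue_agree eAA) -(glue_agree eAB).
  by apply: sepS; rewrite ?glue_agree //; [exists A | exists A | exists B].
by apply: sepS => // q qS; rewrite !ffunE qS.
Qed.

Lemma agree_separableT M c : agree_separable M c [set: 'I_n].
Proof.
move=> A B _ _ eAB; suff -> : A = B by [].
by apply/ffunP => q; rewrite eAB ?in_setT.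
Qed.

Lemma agree_separableI M c S T :
  agree_separable M c S -> agree_separable M c T ->
  menus_betweenness M S T -> agree_separable M c (S :&: T).
Proof.
move=> sepS sepT betw A B AM BM eAB.
have [E EM [eEA eEB]] := betw A B AM BM eAB.
have eAE : agree_on S A E by move=> q /eEA ->.
rewrite (proj_set_eq_subset (subsetIl S T) (sepS A E AM EM eAE)).
exact: proj_set_eq_subset (subsetIr S T) (sepT E B EM BM eEB).
Qed.

End Separability.

Lemma bigcap_ord_prefixS (T : finType) m (F : 'I_m -> {set T}) (k : 'I_m) :
  \bigcap_(i < m | i < k.+1) F i = F k :&: \bigcap_(i < m | i < k) F i.
Proof.
rewrite (bigD1 k) //; congr (_ :&: _); apply: eq_bigl => i /=.
by rewrite ltnS leq_eqVlt -val_eqE; case: ltngtP.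
Qed.

Lemma agree_separable_bigcap n (X : 'I_n -> finType) (M : {set menu X})
    (c : menu X -> {set alt X}) m (T : 'I_m -> {set 'I_n}) :
  (forall j, agree_separable M c (T j)) ->
  (forall k : 'I_m, 1 <= k ->
     menus_betweenness M (\bigcap_(i < m | i < k) T i) (T k)) ->
  agree_separable M c (\bigcap_(i < m) T i).
Proof.
move=> sepT betw.
have prefix k : k <= m -> agree_separable M c (\bigcap_(i < m | i < k) T i).
  elim: k => [|k IHk] km.
    by rewrite big_pred0 => [|i]; [exact: agree_separableT | rewrite ltn0].
  have -> := bigcap_ord_prefixS T (Ordinal km); rewrite /= setIC.
  case: k IHk km => [|k] IHk km.
    by rewrite big_pred0 ?setTI // => i; rewrite ltn0.
  exact: agree_separableI (IHk (ltnW km)) (sepT _) (betw (Ordinal km) isT).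
by rewrite -(eq_bigl _ _ (fun i : 'I_m => ltn_ord i)); apply: prefix.
Qed.

Theorem mainTheorem4 (n : nat) (X : 'I_n -> finType)
  (M : {set menu X}) (c : menu X -> {set alt X})
  (m : nat) (S : 'I_m -> {set 'I_n}) (sigma : {perm 'I_m}) :
  1 < n ->
  (forall q, 0 < #|X q|) ->
  M != set0 ->
  (forall A, A \in M -> menu_ok A) ->
  joint_choice M c ->
  0 < m ->
  (forall j, S j != set0) ->
  \bigcap_(j < m) S j != set0 ->
  (forall j, separable M c (S j)) ->
  (forall k : 'I_m, 1 <= k ->
     menus_betweenness M (\bigcap_(i < m | i < k) S (sigma i)) (S (sigma k))) ->
  separable M c (\bigcap_(j < m) S j).
Proof.
move=> _ _ _ _ _ _ _ _ sepS betw.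
apply/separableP; rewrite (reindex_inj (@perm_inj _ sigma)) /=.
by apply: agree_separable_bigcap betw => j; apply/separableP.
Qed.
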